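(* Let $(F_i)_{i\in\mathbb{Z}}$ be a sequence of $2\times 2$ matrices with non-negative integer entries and determinant $1$, acting on the 2-torus $\mathbb{T}^2=\mathbb{R}^2/\mathbb{Z}^2$ (flat metric inherited from $\mathbb{R}^2$) by multiplication on column vectors, and suppose each $F_i$ is factored as $$F_i=\begin{pmatrix}1&0\\ n_{i,k_i}&1\end{pmatrix}\begin{pmatrix}1&n_{i,k_i-1}\\ 0&1\end{pmatrix}\cdots\begin{pmatrix}1&0\\ n_{i,2}&1\end{pmatrix}\begin{pmatrix}1&n_{i,1}\\ 0&1\end{pmatrix}$$ with non-negative integers $n_{i,1},\dots,n_{i,k_i}$. If $n_{i,k_i}\neq 0$ and $n_{i,1}\neq 0$ for every $i\in\mathbb{Z}$, then $(F_i)_{i\in\mathbb{Z}}$ is an Anosov family on $\mathbb{T}^2$.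
   Context: An Anosov family on a sequence of compact Riemannian manifolds $(M_i)_{i\in\mathbb{Z}}$ (here all equal to $\mathbb{T}^2$) with diffeomorphisms $f_i:M_i\to M_{i+1}$ is one for which the tangent bundle has a continuous splitting $E^s\oplus E^u$ invariant under the derivatives and there are $\lambda\in(0,1)$, $c>0$ with $\|D(f_{i+n-1}\circ\cdots\circ f_i)v\|\le c\lambda^n\|v\|$ for $v\in E^s$ and $\|D(f_{i-n}^{-1}\circ\cdots\circ f_{i-1}^{-1})v\|\le c\lambda^n\|v\|$ for $v\in E^u$, for all $i\in\mathbb{Z}$, $n\ge 1$. *)

From HB Require Import structures.
From mathcomp Require Import all_boot all_order all_algebra.
From mathcomp Require Import all_classical all_reals all_analysis.
Set Implicit Arguments. Unset Strict Implicit. Unset Printing Implicit Defensive.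
Import Order.TTheory GRing.Theory Num.Theory numFieldNormedType.Exports.
Local Open Scope ring_scope.

Definition upper_el (m : nat) : 'M[int]_2 :=
  \matrix_(a < 2, b < 2) (if (a == b) then 1 else if (a == 0 :> nat) then m%:Z else 0).
Definition lower_el (m : nat) : 'M[int]_2 :=
  \matrix_(a < 2, b < 2) (if (a == b) then 1 else if (a == 1 :> nat) then m%:Z else 0).

(* j-th factor (j >= 1): odd positions are upper, even positions lower. *)
Definition factor_el (n : nat -> nat) (j : nat) : 'M[int]_2 :=
  if odd j then upper_el (n j) else lower_el (n j).

(* M_k * M_(k-1) * ... * M_1 *)
Definition factored_product (k : nat) (n : nat -> nat) : 'M[int]_2 :=
  \prod_(j < k) factor_el n (k - j)%N.

Definition enorm {R : realType} (v : 'cV[R]_2) : R :=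
  Num.sqrt (v 0 0 ^+ 2 + v 1 0 ^+ 2).

(* Forward composite D(f_(i+n-1) o ... o f_i) = F_(i+n-1) ... F_i. *)
Fixpoint fwd_prod {R : realType} (F : int -> 'M[R]_2) (i : int) (n : nat) : 'M[R]_2 :=
  match n with
  | 0 => 1%:M
  | n'.+1 => F (i + n'%:Z) *m fwd_prod F i n'
  end.

(* Backward composite D(f_(i-n)^-1 o ... o f_(i-1)^-1) = F_(i-n)^-1 ... F_(i-1)^-1. *)
Fixpoint bwd_prod {R : realType} (F : int -> 'M[R]_2) (i : int) (n : nat) : 'M[R]_2 :=
  match n with
  | 0 => 1%:M
  | n'.+1 => invmx (F (i - n'.+1%:Z)) *m bwd_prod F i n'
  end.

(* A field of subspaces of R^2 (subspace = row space of a 2x2 matrix, i.e.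
   the span of the transposes of its rows), parametrized by points of R^2,
   is continuous if it is locally spanned by continuous sections. *)
Definition continuous_subbundle {R : realType} (E : 'cV[R]_2 -> 'M[R]_2) : Prop :=
  forall x : 'cV[R]_2, exists B : 'cV[R]_2 -> 'M[R]_2,
    continuous B /\ (\forall y \near x, (B y == E y)%MS).

(* Points of T^2 are represented by points of
   R^2; the splitting is required to be Z^2-periodic (well defined on T^2).
   The tangent space at every point is R^2 and the derivative of x |-> F_i x
   is F_i at every point. *)
Definition linear_anosov_family {R : realType} (F : int -> 'M[R]_2) : Prop :=
  exists (Es Eu : int -> 'cV[R]_2 -> 'M[R]_2),
    (forall i x (z : 'cV[int]_2),
        (Es i (x + map_mx intr z)%R == Es i x)%MS /\
        (Eu i (x + map_mx intr z)%R == Eu i x)%MS) /\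
    (* splitting: T_x T^2 = Es ⊕ Eu *)
    (forall i x, (Es i x + Eu i x == 1%:M)%MS /\ ((Es i x :&: Eu i x)%MS == (0 : 'M[R]_2))%MS) /\
    (forall i, continuous_subbundle (Es i) /\ continuous_subbundle (Eu i)) /\
    (* invariance under the derivatives: D f_i (E_i(x)) = E_(i+1)(f_i x) *)
    (forall i x,
        (Es i x *m (F i)^T == Es (i + 1)%R (F i *m x)%R)%MS /\
        (Eu i x *m (F i)^T == Eu (i + 1)%R (F i *m x)%R)%MS) /\
    exists (lam c : R), 0 < lam < 1 /\ 0 < c /\
      (forall i x (v : 'cV[R]_2) (n : nat), (0 < n)%N ->
         (v^T <= Es i x)%MS ->
         enorm (fwd_prod F i n *m v) <= c * lam ^+ n * enorm v) /\
      (forall i x (v : 'cV[R]_2) (n : nat), (0 < n)%N ->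
         (v^T <= Eu i x)%MS ->
         enorm (bwd_prod F i n *m v) <= c * lam ^+ n * enorm v).

(* Each F_i has all entries >= 1: the outer factors [1 0; n 1] and [1 n; 0 1]
   with n >= 1 spread the unit diagonal of the (nonnegative) middle product over
   the whole matrix.  A determinant-one matrix with entries >= 1 maps the
   positive cone into itself and at least doubles the coordinate sum v_0 + v_1.
   Hence, in the coordinate v_1 / (v_0 + v_1), the images of the positive cone
   under F_(j-1) ... F_(j-m) are nested intervals of width at most 1/(m+1); they
   shrink to an invariant line E^u_j expanded by a factor >= 2 at every step.
   Running the same construction on the anti-transposes of F_(-j-1), which are
   conjugate to the inverses by diag(1, -1), gives the stable lines, contracted
   by a factor <= 1/2.  Constant lines are continuous and Z^2-periodic, and the
   Anosov constants are lambda = 1/2, c = 2. *)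

From HB Require Import structures.
From mathcomp Require Import all_boot all_order all_algebra.
From mathcomp Require Import all_classical all_reals all_analysis.
From mathcomp Require Import ring lra zify.
Set Implicit Arguments. Unset Strict Implicit. Unset Printing Implicit Defensive.
Import Order.TTheory GRing.Theory Num.Theory numFieldNormedType.Exports.
Local Open Scope ring_scope.

Lemma ord2P (i : 'I_2) : i = 0 \/ i = 1.
Proof. by case: i => [[|[|//]] ?]; [left|right]; apply: val_inj. Qed.

Lemma mulmx2E (R : pzSemiRingType) n m (A : 'M[R]_(n, 2)) (B : 'M[R]_(2, m)) i j :
  (A *m B) i j = A i 0 * B 0 j + A i 1 * B 1 j.
Proof.
rewrite mxE !big_ord_recl big_ord0 addr0.
by congr (_ * _ + _ * _); congr (_ _ _); apply: val_inj.
Qed.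

Lemma det_mx2 (R : comPzRingType) (A : 'M[R]_2) :
  \det A = A 0 0 * A 1 1 - A 0 1 * A 1 0.
Proof.
have lift00 : lift 0 0 = 1 :> 'I_2 by apply: val_inj.
have lift10 : lift 1 0 = 0 :> 'I_2 by apply: val_inj.
rewrite (expand_det_row _ 0) !big_ord_recl big_ord0 addr0 /cofactor !det_mx11.
by rewrite !mxE /= lift00 /= lift10 expr0 expr1 mul1r mulN1r mulrN.
Qed.

Section NonnegUnitDiag.
Variable R : numDomainType.

Definition nonneg_unitdiag (A : 'M[R]_2) :=
  (forall a b, 0 <= A a b) /\ 1 <= A 0 0 /\ 1 <= A 1 1.

Lemma nonneg_unitdiag1 : nonneg_unitdiag 1%:M.
Proof. by split=> [a b|]; rewrite !mxE //; case: (a == b). Qed.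

Lemma nonneg_unitdiagM A B :
  nonneg_unitdiag A -> nonneg_unitdiag B -> nonneg_unitdiag (A *m B).
Proof.
move=> [A0 [A00 A11]] [B0 [B00 B11]]; split=> [a b|].
  by rewrite mulmx2E addr_ge0 ?mulr_ge0.
rewrite !mulmx2E; split.
  by rewrite -[1]addr0 lerD ?mulr_ge0 // mulr_ege1.
by rewrite -[1]add0r lerD ?mulr_ge0 // mulr_ege1.
Qed.
End NonnegUnitDiag.

Lemma factor_el_nonneg_unitdiag n j : nonneg_unitdiag (factor_el n j).
Proof.
rewrite /factor_el; case: odd; split=> [a b|]; rewrite !mxE //;
  by case: (a == b) => //; case: (_ == _).
Qed.

Lemma factored_productE k n : ~~ odd k ->
  factored_product k.+2 n =
  lower_el (n k.+2) *m (\prod_(j < k) factor_el n (k.+1 - j)) *m upper_el (n 1%N).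
Proof.
move=> k_even; rewrite /factored_product big_ord_recr big_ord_recl /= -!mulmxE.
rewrite subSnn subn0 {1 3}/factor_el /= negbK (negbTE k_even).
by congr (_ *m _ *m _); apply: eq_bigr => i _; rewrite /bump /= subSS.
Qed.

Lemma lower_mul_upper_ge1 (a b : nat) (M : 'M[int]_2) :
  (0 < a)%N -> (0 < b)%N -> nonneg_unitdiag M ->
  forall i j, 1 <= (lower_el a *m M *m upper_el b) i j.
Proof.
move=> a_gt0 b_gt0 [M_ge0 [M00 M11]] i j.
have a_ge1 : 1 <= a%:Z by [].
have b_ge1 : 1 <= b%:Z by [].
have M01 := M_ge0 0 1; have M10 := M_ge0 1 0.
rewrite !mulmx2E !mxE /=.
case: (ord2P i) => ->; case: (ord2P j) => -> /=;
  rewrite ?mul1r ?mul0r ?mulr1 ?mulr0 ?addr0 ?add0r //.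
- by rewrite ler_wpDr // mulr_ege1.
- by rewrite ler_wpDr // mulr_ege1.
- by rewrite ler_wpDr ?addr_ge0 ?mulr_ge0 // mulr_ege1 // ler_wpDr // mulr_ege1.
Qed.

Lemma factored_product_ge1 k n :
  (0 < k)%N -> ~~ odd k -> (0 < n k)%N -> (0 < n 1%N)%N ->
  forall i j, 1 <= factored_product k n i j.
Proof.
case: k => [//|[//|k]] _ /=; rewrite negbK => k_even nk n1.
rewrite factored_productE //; apply: lower_mul_upper_ge1 => //.
apply: big_ind => [|A B|j _]; [exact: nonneg_unitdiag1 | exact: nonneg_unitdiagM |].
exact: factor_el_nonneg_unitdiag.
Qed.

Lemma col_mul (R : pzSemiRingType) m n p j (P : 'M[R]_(m, n)) (Q : 'M[R]_(n, p)) :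
  col j (P *m Q) = P *m col j Q.
Proof. by rewrite !colE mulmxA. Qed.

Section Cross.
Variable R : comPzRingType.
Implicit Types (P : 'M[R]_2) (v w q : 'cV[R]_2).

Definition cross v w := v 0 0 * w 1 0 - v 1 0 * w 0 0.

Lemma cross_mul P v w : cross (P *m v) (P *m w) = \det P * cross v w.
Proof. by rewrite /cross det_mx2 !mulmx2E; ring. Qed.

Lemma cross_col0_mul P q : cross (col 0 P) (P *m q) = \det P * q 1 0.
Proof. by rewrite colE cross_mul /cross !mxE /=; ring. Qed.

Lemma cross_mul_col1 P q : cross (P *m q) (col 1 P) = \det P * q 0 0.
Proof. by rewrite colE cross_mul /cross !mxE /=; ring. Qed.

Lemma cross_col01 P : cross (col 0 P) (col 1 P) = \det P.
Proof. by rewrite [col 1 P]colE cross_col0_mul !mxE mulr1. Qed.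
End Cross.

Section Cone.
Variable R : realFieldType.
Implicit Types (P Q : 'M[R]_2) (v w q : 'cV[R]_2).

Definition csum v := v 0 0 + v 1 0.
Definition cone_coord v := v 1 0 / csum v.
Definition cone_lo P := cone_coord (col 0 P).
Definition cone_hi P := cone_coord (col 1 P).

Lemma cone_coordB v w : csum v != 0 -> csum w != 0 ->
  cone_coord w - cone_coord v = cross v w / (csum v * csum w).
Proof. by move=> v0 w0; rewrite /cone_coord /cross /csum; field; apply/andP. Qed.

Lemma cone_coord_le v w : 0 < csum v -> 0 < csum w ->
  (cone_coord v <= cone_coord w) = (0 <= cross v w).
Proof.
move=> v0 w0; rewrite -subr_ge0 cone_coordB ?gt_eqF //.
by rewrite pmulr_lge0 // invr_gt0 mulr_gt0.
Qed.

Lemma cone_coord_mul_between P q : 0 <= \det P -> 0 <= q 0 0 -> 0 <= q 1 0 ->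
  0 < csum (col 0 P) -> 0 < csum (col 1 P) -> 0 < csum (P *m q) ->
  cone_lo P <= cone_coord (P *m q) <= cone_hi P.
Proof.
move=> P_ge0 q0 q1 P0 P1 Pq.
rewrite !cone_coord_le // cross_col0_mul cross_mul_col1.
by rewrite !mulr_ge0.
Qed.

Lemma cone_lo_le_hi P : 0 <= \det P ->
  0 < csum (col 0 P) -> 0 < csum (col 1 P) -> cone_lo P <= cone_hi P.
Proof. by move=> P_ge0 P0 P1; rewrite cone_coord_le // cross_col01. Qed.

Lemma cone_coord_mul_le P v w : 0 <= \det P ->
  0 < csum v -> 0 < csum w -> 0 < csum (P *m v) -> 0 < csum (P *m w) ->
  cone_coord v <= cone_coord w -> cone_coord (P *m v) <= cone_coord (P *m w).
Proof.
move=> P_ge0 v0 w0 Pv0 Pw0; rewrite !cone_coord_le // cross_mul.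
exact: mulr_ge0.
Qed.

Lemma csum_mul_ge P v : (forall a b, 1 <= P a b) -> 0 <= v 0 0 -> 0 <= v 1 0 ->
  2 * csum v <= csum (P *m v).
Proof.
move=> P_ge1 v0 v1; rewrite /csum !mulmx2E.
have := P_ge1 0 0; have := P_ge1 0 1; have := P_ge1 1 0; have := P_ge1 1 1.
nra.
Qed.

Lemma cone_coord_gt0_lt1 v : 0 < v 0 0 -> 0 < v 1 0 -> 0 < cone_coord v < 1.
Proof.
move=> v0 v1; have v_gt0 : 0 < csum v by rewrite addr_gt0.
by rewrite /cone_coord divr_gt0 //= ltr_pdivrMr // mul1r /csum ltrDr.
Qed.

Definition cone_pt (r : R) : 'cV[R]_2 := \col_i (if i == 0 then 1 - r else r).

Lemma csum_cone_pt r : csum (cone_pt r) = 1.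
Proof. by rewrite /csum !mxE /= subrK. Qed.

Lemma cone_coord_cone_pt r : cone_coord (cone_pt r) = r.
Proof. by rewrite /cone_coord csum_cone_pt divr1 mxE. Qed.

Lemma cone_pt_coord v : csum v != 0 -> v = csum v *: cone_pt (cone_coord v).
Proof.
move=> v_neq0; apply/matrixP => a b; rewrite !mxE (ord1 b) /cone_coord.
case: (ord2P a) => -> /=; last by rewrite mulrC divfK.
by rewrite mulrBr mulr1 mulrC divfK // /csum addrK.
Qed.

Lemma cone_interval_mulr P Q : 0 <= \det P -> (forall a b, 0 <= Q a b) ->
  0 < csum (col 0 P) -> 0 < csum (col 1 P) ->
  0 < csum (col 0 (P *m Q)) -> 0 < csum (col 1 (P *m Q)) ->
  cone_lo P <= cone_lo (P *m Q) /\ cone_hi (P *m Q) <= cone_hi P.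
Proof.
move=> P_ge0 Q_ge0 P0 P1; rewrite /cone_lo /cone_hi !col_mul => PQ0 PQ1.
have colQ_ge0 j a : 0 <= col j Q a 0 by rewrite mxE.
have /andP[-> _] := cone_coord_mul_between P_ge0 (colQ_ge0 _ 0) (colQ_ge0 _ 1) P0 P1 PQ0.
by have /andP[_ ->] := cone_coord_mul_between P_ge0 (colQ_ge0 _ 0) (colQ_ge0 _ 1) P0 P1 PQ1.
Qed.
End Cone.

Lemma eq_le_natSinv (R : archiRealFieldType) (x y : R) :
  (forall m, `|x - y| <= m.+1%:R^-1) -> x = y.
Proof.
move=> close; apply/eqP; rewrite -subr_eq0 -normr_le0.
apply/ler_addgt0Pr => e e_gt0; rewrite add0r.
near \oo%classic => m; apply: le_trans (close m) (ltW _).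
near: m; exact: (near_infty_natSinv_lt (PosNum e_gt0)).
Unshelve. all: by end_near.
Qed.

Lemma dist_le_width (R : realFieldType) (lo hi x y e : R) :
  lo <= x <= hi -> lo <= y <= hi -> hi - lo <= e -> `|x - y| <= e.
Proof.
move=> /andP[lo_x x_hi] /andP[lo_y y_hi] width.
by rewrite ler_norml; apply/andP; split; lra.
Qed.

Section ForwardProduct.
Variables (R : realType) (F : int -> 'M[R]_2).

Lemma fwd_prodD i a b : fwd_prod F i (a + b) = fwd_prod F (i + a%:Z) b *m fwd_prod F i a.
Proof.
elim: b => [|b IH]; first by rewrite addn0 /= mul1mx.
by rewrite addnS /= IH mulmxA PoszD addrA.
Qed.

Lemma det_fwd_prod i m : (forall j, \det (F j) = 1) -> \det (fwd_prod F i m) = 1.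
Proof. by move=> F_det; elim: m => [|m IH]; rewrite /= ?det1 // det_mulmx F_det IH mulr1. Qed.

Lemma fwd_prod_ge0 i m :
  (forall j a b, 0 <= F j a b) -> forall a b, 0 <= fwd_prod F i m a b.
Proof.
move=> F_ge0; elim: m => [|m IH] a b /=; first by rewrite mxE; case: (a == b).
by rewrite mulmx2E addr_ge0 ?mulr_ge0.
Qed.
End ForwardProduct.

Section UnstableDirection.
Variables (R : realType) (K : int -> 'M[R]_2).
Hypothesis K_ge1 : forall j a b, 1 <= K j a b.
Hypothesis K_det : forall j, \det (K j) = 1.

Let K_ge0 j a b : 0 <= K j a b. Proof. exact: le_trans (K_ge1 j a b). Qed.

(* past j m = K_(j-1) *m ... *m K_(j-m) *)
Definition past j m := fwd_prod K (j - m%:Z) m.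

Lemma pastD j m d : past j (m + d) = past j m *m fwd_prod K (j - (m + d)%:Z) d.
Proof.
rewrite /past; have -> : j - m%:Z = j - (m + d)%:Z + d%:Z by rewrite PoszD; ring.
by rewrite -fwd_prodD addnC.
Qed.

Lemma pastS j m : past (j + 1) m.+1 = K j *m past j m.
Proof.
rewrite /past /=; have -> : j + 1 - m.+1%:Z = j - m%:Z by rewrite -addn1 PoszD; ring.
by congr (K _ *m _); ring.
Qed.

Lemma det_past j m : \det (past j m) = 1.
Proof. exact: det_fwd_prod. Qed.

Lemma csum_fwd_prod i m c : m.+1%:R <= csum (col c (fwd_prod K i m)).
Proof.
elim: m => [|m IH] /=.
  by rewrite /csum !mxE; case: (ord2P c) => ->; rewrite /= ?addr0 ?add0r.
rewrite col_mul.
apply: le_trans (csum_mul_ge (K_ge1 _) _ _); rewrite ?mxE ?fwd_prod_ge0 //.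
by rewrite -[m.+2]addn1 natrD mulr2n mulrDl mul1r lerD // (le_trans _ IH) // ler1n.
Qed.

Lemma csum_past_gt0 j m c : 0 < csum (col c (past j m)).
Proof. exact: lt_le_trans (csum_fwd_prod _ _ _). Qed.

Lemma past_interval_subset j m M : (m <= M)%N ->
  cone_lo (past j m) <= cone_lo (past j M) /\ cone_hi (past j M) <= cone_hi (past j m).
Proof.
move=> le_mM; have csum_gt0 := csum_past_gt0 j M.
rewrite -(subnKC le_mM) pastD in csum_gt0 *.
apply: cone_interval_mulr; rewrite ?det_past ?csum_past_gt0 //.
exact: fwd_prod_ge0.
Qed.

Lemma past_nested j m m' : cone_lo (past j m) <= cone_hi (past j m').
Proof.
have [lo_le _] := past_interval_subset j (leq_maxl m m').
have [_ hi_le] := past_interval_subset j (leq_maxr m m').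
apply: le_trans lo_le (le_trans _ hi_le).
by apply: cone_lo_le_hi; rewrite ?det_past ?csum_past_gt0.
Qed.

Lemma past_width j m : cone_hi (past j m) - cone_lo (past j m) <= m.+1%:R^-1.
Proof.
have s0 := csum_fwd_prod (j - m%:Z) m 0; have s1 := csum_fwd_prod (j - m%:Z) m 1.
rewrite cone_coordB ?gt_eqF ?csum_past_gt0 // cross_col01 det_past div1r.
rewrite lef_pV2 ?posrE ?mulr_gt0 ?csum_past_gt0 //.
by rewrite -[_%:R]mul1r ler_pM // (le_trans _ s0) // ler1n.
Qed.

Definition unstable_coord j := sup (range (fun m => cone_lo (past j m))).

Lemma unstable_coord_between j m :
  cone_lo (past j m) <= unstable_coord j <= cone_hi (past j m).
Proof.
have lo_ne0 : (range (fun m => cone_lo (past j m)) !=set0)%classic.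
  by exists (cone_lo (past j 0)), 0%N.
apply/andP; split.
  apply: sup_upper_bound; last by exists m.
  by split=> //; exists (cone_hi (past j 0)) => _ [m' _ <-]; exact: past_nested.
by apply: ge_sup => // _ [m' _ <-]; exact: past_nested.
Qed.

Lemma unstable_coord_ge0_le1 j : 0 <= unstable_coord j <= 1.
Proof.
have := unstable_coord_between j 0.
by rewrite /cone_lo /cone_hi /cone_coord /csum !mxE /= mul0r add0r div1r invr1.
Qed.

Local Notation u j := (cone_pt (unstable_coord j)).

Lemma unstable_image_ge1 j a : 1 <= (K j *m u j) a 0.
Proof.
have /andP[r0 r1] := unstable_coord_ge0_le1 j.
have := K_ge1 j a 0; have := K_ge1 j a 1.
rewrite mulmx2E !mxE /=; nra.
Qed.

Lemma csum_unstable_image_ge2 j : 2 <= csum (K j *m u j).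
Proof.
have /andP[r0 r1] := unstable_coord_ge0_le1 j.
have := csum_mul_ge (K_ge1 j) (v := u j).
by rewrite csum_cone_pt mulr1 !mxE /= subr_ge0; apply.
Qed.

(* Both sides lie in the image of the positive cone under past (j + 1) m.+1,
   an interval of width at most 1/(m+2). *)
Lemma unstable_coord_invariant j :
  cone_coord (K j *m u j) = unstable_coord (j + 1).
Proof.
have Ku_gt0 : 0 < csum (K j *m u j) by apply: lt_le_trans (csum_unstable_image_ge2 j).
apply: eq_le_natSinv => m.
have /andP[lo_u u_hi] := unstable_coord_between j m.
rewrite -(cone_coord_cone_pt (unstable_coord j)) in lo_u u_hi.
have /andP[lo_r r_hi] := unstable_coord_between (j + 1) m.+1.
have := past_width (j + 1) m.+1.
rewrite /cone_lo /cone_hi pastS !col_mul in lo_r r_hi *.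
have [P0 P1] := (csum_past_gt0 j m 0, csum_past_gt0 j m 1).
have [KP0 KP1] := (csum_past_gt0 (j + 1) m.+1 0, csum_past_gt0 (j + 1) m.+1 1).
rewrite pastS !col_mul in KP0 KP1.
have u_gt0 : 0 < csum (u j) by rewrite csum_cone_pt.
have detK_ge0 : 0 <= \det (K j) by rewrite K_det.
have lo_Ku := cone_coord_mul_le detK_ge0 P0 u_gt0 KP0 Ku_gt0 lo_u.
have Ku_hi := cone_coord_mul_le detK_ge0 u_gt0 P1 Ku_gt0 KP1 u_hi.
have shrink : m.+2%:R^-1 <= m.+1%:R^-1 :> R by rewrite lef_pV2 ?posrE ?ltr0Sn // ler_nat.
move=> width; apply: (dist_le_width _ _ (le_trans width shrink)).
  by rewrite lo_Ku Ku_hi.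
by rewrite lo_r r_hi.
Qed.

Lemma unstable_direction : exists r : int -> R, forall j, 0 < r j < 1 /\
  exists2 A, 2 <= A & K j *m cone_pt (r j) = A *: cone_pt (r (j + 1)).
Proof.
exists unstable_coord => j; split.
  rewrite -[j](subrK 1) -unstable_coord_invariant.
  by apply: cone_coord_gt0_lt1; apply: lt_le_trans (unstable_image_ge1 _ _).
exists (csum (K j *m u j)); first exact: csum_unstable_image_ge2.
rewrite -unstable_coord_invariant; apply: cone_pt_coord.
by rewrite gt_eqF // (lt_le_trans _ (csum_unstable_image_ge2 j)).
Qed.
End UnstableDirection.

Section AntiTranspose.
Variable R : comPzRingType.

Definition antitr (M : 'M[R]_2) := \matrix_(a, b) M (rev_ord b) (rev_ord a).
Definition refl_mx : 'M[R]_2 := diag_mx (\row_i (if i == 0 then 1 else -1)).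

Let rev_ord0 : rev_ord 0 = 1 :> 'I_2. Proof. exact: val_inj. Qed.
Let rev_ord1 : rev_ord 1 = 0 :> 'I_2. Proof. exact: val_inj. Qed.

Lemma det_antitr M : \det (antitr M) = \det M.
Proof. by rewrite !det_mx2 !mxE rev_ord0 rev_ord1; ring. Qed.

Lemma mulmx_refl_antitr M : M *m (refl_mx *m antitr M) = \det M *: refl_mx.
Proof.
apply/matrixP => a b; rewrite det_mx2 !mulmx2E !mxE.
by case: (ord2P a) => ->; case: (ord2P b) => -> /=; rewrite ?rev_ord0 ?rev_ord1; ring.
Qed.
End AntiTranspose.
Arguments refl_mx {R}.

Section StableDirection.
Variable R : realType.

Variable K : int -> 'M[R]_2.
Hypothesis K_ge1 : forall j a b, 1 <= K j a b.
Hypothesis K_det : forall j, \det (K j) = 1.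

(* refl_mx *m antitr (K i) is the inverse of K i, so the unstable direction of
   the family antitr (K (- (j + 1))), reflected by refl_mx, is stable for K. *)
Lemma stable_direction : exists p : int -> R, forall i, 0 < p i < 1 /\
  exists2 b, 0 < b <= 2^-1 &
    K i *m (refl_mx *m cone_pt (p i)) = b *: (refl_mx *m cone_pt (p (i + 1))).
Proof.
pose K' j := antitr (K (- (j + 1))).
have K'_ge1 j a b : 1 <= K' j a b by rewrite mxE.
have K'_det j : \det (K' j) = 1 by rewrite det_antitr.
have [q q_dir] := unstable_direction K'_ge1 K'_det.
exists (fun i => q (- i)) => i; split; first by case: (q_dir (- i)).
have [_ [A A_ge2]] := q_dir (- (i + 1)).
rewrite /K' (_ : - (i + 1) + 1 = - i) ?opprK => [back|]; last by ring.
have A_gt0 : 0 < A by apply: lt_le_trans A_ge2.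
exists A^-1; first by rewrite invr_gt0 A_gt0 lef_pV2 ?posrE.
have -> : cone_pt (q (- i)) = A^-1 *: (antitr (K i) *m cone_pt (q (- (i + 1)))).
  by rewrite back scalerA mulVf ?gt_eqF ?scale1r.
by rewrite -!scalemxAr !mulmxA -(mulmxA (K i)) mulmx_refl_antitr K_det scale1r.
Qed.
End StableDirection.

Section Lines.
Variable R : fieldType.
Implicit Types (v w : 'cV[R]_2) (G : 'M[R]_2).

Definition line_mx v : 'M[R]_2 := const_mx 1 *m v^T.

Lemma line_mx_eqmx v : (line_mx v :=: v^T)%MS.
Proof.
apply/eqmxP/andP; split; first exact: submxMl.
apply/submxP; exists (delta_mx 0 0); rewrite mulmxA.
rewrite (_ : delta_mx 0 0 *m const_mx 1 = 1%:M) ?mul1mx //.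
by apply/matrixP => a b; rewrite (ord1 a) (ord1 b) mulmx2E !mxE /= mulr1 mul0r addr0.
Qed.

Lemma line_mxM G v : line_mx v *m G^T = line_mx (G *m v).
Proof. by rewrite /line_mx -mulmxA -trmx_mul. Qed.

Lemma line_mxZ a v : a != 0 -> (line_mx (a *: v) == line_mx v)%MS.
Proof.
move=> a_neq0; apply/eqmxP; apply: eqmx_trans (line_mx_eqmx _) _.
apply: eqmx_trans _ (eqmx_sym (line_mx_eqmx _)).
by rewrite linearZ; exact: eqmx_scale.
Qed.

Lemma sub_line_mx v w : (w^T <= line_mx v)%MS -> exists mu, w = mu *: v.
Proof.
rewrite line_mx_eqmx => /submxP[D wD]; exists (D 0 0); apply: trmx_inj.
by rewrite wD {1}[D]mx11_scalar mul_scalar_mx linearZ.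
Qed.

Lemma line_mx_direct v w : cross v w != 0 ->
  (line_mx v + line_mx w == 1%:M)%MS /\
  ((line_mx v :&: line_mx w)%MS == (0 : 'M[R]_2))%MS.
Proof.
move=> vw_neq0.
pose X := \matrix_(a < 2, b < 2) (if a == 0 then v b 0 else w b 0).
have X_full : (1%:M <= X)%MS.
  by rewrite sub1mx row_full_unit unitmxE det_mx2 !mxE /= unitfE.
have X_sub : (X <= v^T + w^T)%MS.
  apply/row_subP => a; case: (ord2P a) => ->.
    apply: submx_trans (addsmxSl _ _); rewrite (_ : row 0 X = v^T) //.
    by apply/matrixP => i j; rewrite !mxE (ord1 i).
  apply: submx_trans (addsmxSr _ _); rewrite (_ : row 1 X = w^T) //.
  by apply/matrixP => i j; rewrite !mxE (ord1 i).
have full : (1%:M <= v^T + w^T)%MS := submx_trans X_full X_sub.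
have sum_eq := adds_eqmx (line_mx_eqmx v) (line_mx_eqmx w).
split; first by apply/andP; rewrite submx1 sum_eq.
apply/andP; split; last exact: sub0mx.
rewrite submx0 -mxrank_eq0 (cap_eqmx (line_mx_eqmx v) (line_mx_eqmx w)).
have := mxrank_sum_cap v^T w^T; have := rank_leq_row v^T; have := rank_leq_row w^T.
move: full; rewrite sub1mx => /eqP ->.
lia.
Qed.
End Lines.

Section Hyperbolicity.
Variable R : realType.
Implicit Types (v w : 'cV[R]_2) (p r : R).

Lemma enormZ a v : enorm (a *: v) = `|a| * enorm v.
Proof. by rewrite /enorm !mxE !exprMn -mulrDr sqrtrM ?sqr_ge0 // sqrtr_sqr. Qed.

Lemma enorm_refl_mx v : enorm (refl_mx *m v) = enorm v.
Proof. by rewrite /enorm !mulmx2E !mxE /=; congr Num.sqrt; ring. Qed.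

Lemma enorm_cone_pt r : 0 <= r <= 1 -> 2^-1 <= enorm (cone_pt r) <= 1.
Proof.
move=> /andP[r_ge0 r_le1]; rewrite /enorm !mxE /=.
set x := _ + _; have x_ge0 : 0 <= x by rewrite addr_ge0 ?sqr_ge0.
have x_lo : (2^-1) ^+ 2 <= x by rewrite /x; nra.
have x_hi : x <= 1 by rewrite /x; nra.
apply/andP; split; last by rewrite -sqrtr1 ler_sqrt.
by rewrite -[2^-1]ger0_norm // -sqrtr_sqr ler_sqrt.
Qed.

Lemma cross_refl_cone_pt p r : 0 < p < 1 -> 0 < r < 1 ->
  cross (refl_mx *m cone_pt p) (cone_pt r) != 0.
Proof.
move=> /andP[p_gt0 p_lt1] /andP[r_gt0 r_lt1]; rewrite /cross !mulmx2E !mxE /=.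
by rewrite lt0r_neq0 //; nra.
Qed.

Lemma enorm_line_contract (M : 'M[R]_2) w w' (g e mu : R) :
  0 < g <= e -> M *m w = g *: w' -> 2^-1 <= enorm w -> enorm w' <= 1 ->
  enorm (M *m (mu *: w)) <= 2 * e * enorm (mu *: w).
Proof.
move=> /andP[g_gt0 g_le_e] Mw w_ge w'_le.
rewrite -scalemxAr Mw scalerA !enormZ normrM (gtr0_norm g_gt0).
have mu_ge0 := normr_ge0 mu; have w'_ge0 : 0 <= enorm w' by exact: sqrtr_ge0.
have g_w' : g * enorm w' <= e by nra.
have mu_e_ge0 : 0 <= `|mu| * e by rewrite mulr_ge0 // (le_trans (ltW g_gt0)).
apply: le_trans (_ : `|mu| * e <= _); first by rewrite -mulrA ler_wpM2l.
nra.
Qed.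

Lemma fwd_prod_line (G : int -> 'M[R]_2) (s : int -> 'cV[R]_2) :
  (forall i, exists2 b, 0 < b <= 2^-1 & G i *m s i = b *: s (i + 1)) ->
  forall i n, exists2 g, 0 < g <= 2^-1 ^+ n & fwd_prod G i n *m s i = g *: s (i + n%:Z).
Proof.
move=> s_inv i; elim=> [|n [g /andP[g_gt0 g_le] Gs]].
  by exists 1; rewrite ?expr0 ?ltr01 //= mul1mx addr0 scale1r.
have [b /andP[b_gt0 b_le] Gsn] := s_inv (i + n%:Z).
exists (g * b); first by rewrite mulr_gt0 //= exprSr ler_pM // ltW.
by rewrite /= -mulmxA Gs -scalemxAr Gsn scalerA -[n.+1]addn1 PoszD addrA.
Qed.

Lemma bwd_prod_line (G : int -> 'M[R]_2) (u : int -> 'cV[R]_2) :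
  (forall i, exists2 b, 0 < b <= 2^-1 & invmx (G i) *m u (i + 1) = b *: u i) ->
  forall i n, exists2 g, 0 < g <= 2^-1 ^+ n & bwd_prod G i n *m u i = g *: u (i - n%:Z).
Proof.
move=> u_inv i; elim=> [|n [g /andP[g_gt0 g_le] Gu]].
  by exists 1; rewrite ?expr0 ?ltr01 //= mul1mx subr0 scale1r.
have [b /andP[b_gt0 b_le] Gun] := u_inv (i - n.+1%:Z).
exists (g * b); first by rewrite mulr_gt0 //= exprSr ler_pM // ltW.
have shift : i - n%:Z = i - n.+1%:Z + 1 by rewrite -[n.+1]addn1 PoszD; ring.
by rewrite /= -mulmxA Gu shift -scalemxAr Gun scalerA.
Qed.
End Hyperbolicity.

Lemma const_subbundle (R : realType) (M : 'M[R]_2) :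
  continuous_subbundle (fun _ : 'cV[R]_2 => M).
Proof.
move=> x; exists (fun _ => M); split; first exact: cst_continuous.
by near=> y; rewrite !submx_refl.
Unshelve. all: by end_near.
Qed.

Lemma linear_anosov_of_lines (R : realType) (G : int -> 'M[R]_2) (s u : int -> 'cV[R]_2) :
  (forall i, G i \in unitmx) ->
  (forall i, exists2 b, 0 < b <= 2^-1 & G i *m s i = b *: s (i + 1)) ->
  (forall i, exists2 a, 2 <= a & G i *m u i = a *: u (i + 1)) ->
  (forall i, 2^-1 <= enorm (s i) <= 1) -> (forall i, 2^-1 <= enorm (u i) <= 1) ->
  (forall i, cross (s i) (u i) != 0) ->
  linear_anosov_family G.
Proof.
move=> G_unit s_inv u_inv s_norm u_norm su_indep.
have u_back i : exists2 b, 0 < b <= 2^-1 & invmx (G i) *m u (i + 1) = b *: u i.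
  have [a a_ge2 Gu] := u_inv i; have a_gt0 : 0 < a by apply: lt_le_trans a_ge2.
  exists a^-1; first by rewrite invr_gt0 a_gt0 lef_pV2 ?posrE.
  by rewrite -[u (i + 1)]scale1r -(mulVf (lt0r_neq0 a_gt0)) -scalerA -Gu scalemxAr mulKmx.
exists (fun i _ => line_mx (s i)), (fun i _ => line_mx (u i)).
split; first by move=> *; rewrite !submx_refl.
split; first by move=> i _; apply: line_mx_direct.
split; first by move=> i; split; apply: const_subbundle.
split.
  move=> i _; rewrite !line_mxM; split.
    by have [b /andP[b_gt0 _] ->] := s_inv i; apply: line_mxZ; rewrite gt_eqF.
  by have [a a_ge2 ->] := u_inv i; apply: line_mxZ; rewrite gt_eqF // (lt_le_trans _ a_ge2).
exists 2^-1, 2; split; first by rewrite invr_gt0 ltr0n invf_lt1 ?ltr0n ?ltr1n.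
split=> //; split=> i _ v n _ /sub_line_mx[mu ->].
  have [g g_le Gs] := fwd_prod_line s_inv i n.
  apply: (enorm_line_contract mu g_le Gs).
    by case/andP: (s_norm i).
  by case/andP: (s_norm (i + n%:Z)).
have [g g_le Gu] := bwd_prod_line u_back i n.
apply: (enorm_line_contract mu g_le Gu).
  by case/andP: (u_norm i).
by case/andP: (u_norm (i - n%:Z)).
Qed.

Theorem corollary3p6 (R : realType) (F : int -> 'M[int]_2)
  (k : int -> nat) (n : int -> nat -> nat) :
  (forall i a b, 0 <= F i a b) ->
  (forall i, \det (F i) = 1) ->
  (forall i, (0 < k i)%N /\ ~~ odd (k i)) ->
  (forall i, F i = factored_product (k i) (n i)) ->
  (forall i, n i (k i) <> 0%N /\ n i 1%N <> 0%N) ->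
  linear_anosov_family (fun i => map_mx (intr : int -> R) (F i)).
Proof.
(* Nonnegativity of F i already follows from its factorization. *)
move=> _ F_det k_even F_fact n_pos.
set G := fun i => map_mx (intr : int -> R) (F i).
have G_ge1 i a b : 1 <= G i a b.
  have [k_gt0 k_ev] := k_even i; have [nk_neq0 n1_neq0] := n_pos i.
  rewrite mxE ler1z F_fact; apply: factored_product_ge1; rewrite // lt0n; exact/eqP.
have G_det i : \det (G i) = 1 by rewrite det_map_mx F_det rmorph1.
have [r r_dir] := unstable_direction G_ge1 G_det.
have [p p_dir] := stable_direction G_ge1 G_det.
have r01 i : 0 < r i < 1 by case: (r_dir i).
have p01 i : 0 < p i < 1 by case: (p_dir i).
apply: (linear_anosov_of_lines (s := fun i => refl_mx *m cone_pt (p i))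
                               (u := fun i => cone_pt (r i))).
- by move=> i; rewrite unitmxE G_det unitr1.
- by move=> i; case: (p_dir i).
- by move=> i; case: (r_dir i).
- move=> i; rewrite enorm_refl_mx; apply: enorm_cone_pt.
  by have /andP[p_gt0 p_lt1] := p01 i; rewrite !ltW.
- move=> i; apply: enorm_cone_pt.
  by have /andP[r_gt0 r_lt1] := r01 i; rewrite !ltW.
- by move=> i; apply: cross_refl_cone_pt.
Qed.
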